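(* For $n\ge 2$, $$|\mathcal C_n(321)|=|\mathcal A_{n-1}|,$$ where $\mathcal A_{m}$ is the set of permutations in $S_{m}$ avoiding all six vincular patterns $\underline{32}\,\underline{41}$, $\underline{14}\,\underline{23}$, $\underline{41}\,\underline{32}$, $\underline{23}\,\underline{14}$, $\underline{23}\,\underline{1}$, $\underline{1}\,\underline{32}$.
   Context: Permutations of $[n]=\{1,\dots,n\}$ are written in one-line notation $\pi=\pi_1\cdots\pi_n$. A permutation contains $321$ if there are $i<j<k$ with $\pi_i>\pi_j>\pi_k$, and avoids $321$ otherwise. $\mathcal C_n$ is the set of cyclic permutations of $[n]$ (a single $n$-cycle), and $\mathcal C_n(321)$ those avoiding $321$. Vincular patterns: for a sequence $w=w_1\cdots w_N$ of distinct integers, - $w$ contains $\underline{32}\,\underline{41}$ if there are $i,j$ with $i+2\le j\le N-1$ and $w_{j+1}<w_{i+1}<w_i<w_j$; - $w$ contains $\underline{14}\,\underline{23}$ if there are such $i,j$ with $w_i<w_j<w_{j+1}<w_{i+1}$; - $w$ contains $\underline{41}\,\underline{32}$ if there are such $i,j$ with $w_{i+1}<w_{j+1}<w_j<w_i$; - $w$ contains $\underline{23}\,\underline{14}$ if there are such $i,j$ with $w_j<w_i<w_{i+1}<w_{j+1}$; - $w$ contains $\underline{23}\,\underline{1}$ if there is $i$ with $i+1\le N-1$ and $w_N<w_i<w_{i+1}$; - $w$ contains $\underline{1}\,\underline{32}$ if there is $j$ with $2\le j\le N-1$ and $w_1<w_{j+1}<w_j$. $w$ avoids a pattern if it does not contain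 it. *)

From mathcomp Require Import all_boot all_order all_fingroup.
Set Implicit Arguments. Unset Strict Implicit. Unset Printing Implicit Defensive.

(* One-line notation of s : 'S_n, as a sequence of naturals (values 0..n-1;
   all patterns are order-based so the shift from 1..n is irrelevant). *)
Definition oneline n (s : 'S_n) : seq nat := [seq val (s i) | i <- enum 'I_n].

Definition is_cyclic n (s : 'S_n) : bool :=
  [exists x : 'I_n, porbit s x == [set: 'I_n]].

Definition contains321 n (s : 'S_n) : bool :=
  [exists i : 'I_n, exists j : 'I_n, exists k : 'I_n,
     [&& i < j, j < k, s j < s i & s k < s j]].

(* Vincular patterns on a sequence w = w_1 ... w_N; below indices are
   0-based: w_{i} (1-based) is nth 0 w (i-1). *)
Section Vincular.
Variable w : seq nat.
Local Notation N := (size w).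
Let wn (i : nat) : nat := nth 0 w i.

(* generic two-block pattern: 1-based i, j with i+2 <= j <= N-1,
   i.e. 0-based i, j with i+2 <= j and j+1 < N *)
Definition two_block (P : nat -> nat -> nat -> nat -> bool) : bool :=
  [exists i : 'I_N, exists j : 'I_N,
     [&& i.+2 <= j, j.+1 < N & P (wn i) (wn (i.+1)) (wn j) (wn (j.+1))]].

Definition contains_3241 : bool := two_block (fun a b c d => [&& d < b, b < a & a < c]).
Definition contains_1423 : bool := two_block (fun a b c d => [&& a < c, c < d & d < b]).
Definition contains_4132 : bool := two_block (fun a b c d => [&& b < d, d < c & c < a]).
Definition contains_2314 : bool := two_block (fun a b c d => [&& c < a, a < b & b < d]).

(* 23_1: 1-based i with i+1 <= N-1 and w_N < w_i < w_{i+1} *)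
Definition contains_231 : bool :=
  [exists i : 'I_N, (i.+2 < N) && (wn (N.-1) < wn i < wn (i.+1))].

(* 1_32: 1-based j with 2 <= j <= N-1 and w_1 < w_{j+1} < w_j *)
Definition contains_132 : bool :=
  [exists j : 'I_N, [&& 0 < j, j.+1 < N & wn 0 < wn (j.+1) < wn j]].

Definition avoids_all_six : bool :=
  ~~ [|| contains_3241, contains_1423, contains_4132, contains_2314,
         contains_231 | contains_132].
End Vincular.

Definition A_set m : {set 'S_m} := [set s : 'S_m | avoids_all_six (oneline s)].
Definition C321 n : {set 'S_n} := [set s : 'S_n | is_cyclic s && ~~ contains321 s].

(* A permutation contains 321 iff two of its arcs x -> s x and y -> s y cross,
   i.e. x < y and s y < s x, while both are ascents or both are descents: a
   321 at i < j < k yields such a pair at (i, j) or (j, k), and conversely a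
   crossing pair together with a counting argument produces the missing third
   point.  Every n-cycle is (n, w_1, ..., w_{n-1}) for a unique w in S_{n-1},
   and its arcs are the pairs of consecutive letters of the closed word
   n w_1 ... w_{n-1} n.  A crossing of two such pairs either uses the letter n,
   giving the patterns 23_1 and 1_32, or two adjacencies inside w, giving the
   four two-block patterns; this identifies C_n(321) with A_{n-1}. *)

From mathcomp Require Import all_boot all_order all_fingroup.
From mathcomp Require Import zify.
Set Implicit Arguments. Unset Strict Implicit. Unset Printing Implicit Defensive.

Definition crossing (a b a' b' : nat) : bool :=
  [&& a < a', b' < b & (a < b) == (a' < b')].

Lemma card_ord_ltn n a : a <= n -> #|[set v : 'I_n | v < a]| = a.
Proof.
move=> le_an; have widen_inj : injective (widen_ord le_an).
  by move=> u v [] /val_inj.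
rewrite -[RHS]card_ord -(card_imset _ widen_inj).
congr #|pred_of_set _|; apply/setP => v; rewrite inE.
apply/idP/imsetP => [lt_va | [u _ ->]]; last exact: (ltn_ord u).
by exists (Ordinal lt_va) => //; apply: val_inj.
Qed.

Lemma card_ord_geq n a : a <= n -> #|[set v : 'I_n | a <= v]| = n - a.
Proof.
move=> le_an; have -> : [set v : 'I_n | a <= v] = ~: [set v : 'I_n | v < a].
  by apply/setP => v; rewrite !inE leqNgt.
by rewrite cardsCs setCK card_ord card_ord_ltn.
Qed.

Section Inversions.
Variable n : nat.
Implicit Types (s : 'S_n) (x y : 'I_n).

(* Otherwise s would map the n - y + 1 points x, y, y + 1, ..., n - 1 injectively
   into the n - s y <= n - y points s y, ..., n - 1. *)
Lemma weak_excedance_inversion s x y :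
  x < y -> y <= s y -> s y < s x -> exists2 z : 'I_n, y < z & s z < s y.
Proof.
move=> lt_xy le_y_sy lt_sy_sx.
case: (pickP [pred z : 'I_n | (y < z) && (s z < s y)]) => [z /andP[] | no_z].
  by exists z.
pose T := x |: [set z : 'I_n | y <= z].
have sub_T : s @: T \subset [set v : 'I_n | s y <= v].
  apply/subsetP => _ /imsetP[z + ->]; rewrite !inE => /predU1P[-> | le_yz].
    exact: ltnW.
  have [->|ne_zy] := eqVneq z y; first by [].
  have lt_yz : y < z by rewrite ltn_neqAle val_eqE eq_sym ne_zy.
  by move: (no_z z) => /= /negbT; rewrite lt_yz -leqNgt.
have := subset_leq_card sub_T; rewrite card_imset; last exact: perm_inj.
rewrite cardsU1 !inE -ltnNge lt_xy !card_ord_geq //; try exact: ltnW.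
have := ltn_ord (s y); have := ltn_ord y; lia.
Qed.

(* Conjugating by i |-> n - 1 - i turns weak deficiencies into weak excedances. *)
Lemma weak_deficiency_inversion s x y :
  x < y -> s x <= x -> s y < s x -> exists2 z : 'I_n, z < x & s x < s z.
Proof.
move=> lt_xy le_sx_x lt_sy_sx; pose r : 'S_n := perm rev_ord_inj.
have conjE u : (s ^ r)%g (r u) = r (s u) by rewrite permJ.
have rE u : val (r u) = n - u.+1 by rewrite permE.
have := ltn_ord (s x); have := ltn_ord (s y); have := ltn_ord x; have := ltn_ord y => *.
have [z] : exists2 z : 'I_n, r x < z & (s ^ r)%g z < (s ^ r)%g (r x).
  by apply: (@weak_excedance_inversion _ (r y)); rewrite ?conjE !rE; lia.
have -> : z = r (rev_ord z) by rewrite permE rev_ordK.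
rewrite !conjE !rE; move: (rev_ord z) => u ? ?.
by exists u; move: (ltn_ord u) (ltn_ord (s u)); lia.
Qed.

Lemma contains321P s :
  reflect (exists x y : 'I_n, crossing x (s x) y (s y)) (contains321 s).
Proof.
apply: (iffP existsP) => [[i /existsP[j /existsP[k /and4P[lt_ij lt_jk lt_sji lt_skj]]]]|].
  have [lt_j_sj | le_sj_j] := ltnP j (s j).
    by exists i, j; apply/and3P; split; lia.
  by exists j, k; apply/and3P; split; lia.
move=> [x [y /and3P[lt_xy lt_sy_sx /eqP same]]].
have [lt_y_sy | le_sy_y] := ltnP y (s y).
  have [z lt_yz lt_sz_sy] := weak_excedance_inversion lt_xy (ltnW lt_y_sy) lt_sy_sx.
  by exists x; apply/existsP; exists y; apply/existsP; exists z; apply/and4P.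
have le_sx_x : s x <= x by rewrite leqNgt same -leqNgt.
have [z lt_zx lt_sx_sz] := weak_deficiency_inversion lt_xy le_sx_x lt_sy_sx.
by exists z; apply/existsP; exists x; apply/existsP; exists y; apply/and4P.
Qed.

End Inversions.

Definition ordS_perm n : 'S_n := perm (@ordS_inj n).

Lemma ordS_permX n (x : 'I_n) k : val ((ordS_perm n ^+ k)%g x) = (x + k) %% n.
Proof.
rewrite permX; elim: k => [|k IHk] /=; first by rewrite addn0 modn_small.
by rewrite permE /= IHk -addn1 modnDml addn1 addnS.
Qed.

Lemma ordS_perm_conjE n (t : 'S_n) k : (ordS_perm n ^ t)%g (t k) = t (ordS k).
Proof. by rewrite permJ permE. Qed.

Lemma ordS_perm_conjX n (t : 'S_n.+1) (k : 'I_n.+1) :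
  ((ordS_perm n.+1 ^ t) ^+ k)%g (t ord0) = t k.
Proof.
rewrite -conjXg permJ; congr (t _); apply: val_inj.
by rewrite ordS_permX add0n modn_small.
Qed.

Lemma ordS_perm_conj_cyclic n (t : 'S_n.+1) : is_cyclic (ordS_perm n.+1 ^ t)%g.
Proof.
apply/existsP; exists (t ord0); apply/eqP/setP => y; rewrite inE.
by rewrite -[y](permKV t) -ordS_perm_conjX mem_porbit.
Qed.

Lemma cyclic_ordS_perm_conj n (p : 'S_n.+1) x :
  is_cyclic p -> exists2 t : 'S_n.+1, t ord0 = x & (ordS_perm n.+1 ^ t)%g = p.
Proof.
case/existsP => x0 /eqP full.
have card_orbit : #|porbit p x| = n.+1.
  have -> : porbit p x = [set: 'I_n.+1].
    by apply/eqP; rewrite -full eq_porbit_mem full inE.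
  by rewrite cardsT card_ord.
pose f (k : 'I_n.+1) := (p ^+ k)%g x.
have f_inj : injective f.
  move=> k1 k2; rewrite /f !permX => eq_f; apply/val_inj/eqP.
  have uniq_orbit := uniq_traject_porbit p x; rewrite card_orbit in uniq_orbit.
  rewrite -(nth_uniq x _ _ uniq_orbit) ?size_traject ?ltn_ord //.
  by rewrite !nth_traject ?ltn_ord //; apply/eqP.
exists (perm f_inj); first by rewrite permE /f expg0 perm1.
apply/permP => y; rewrite -[y](permKV (perm f_inj)); move: (_ y) => k.
rewrite ordS_perm_conjE !permE /f -permM -expgSr.
have [lt_kn | le_nk] := ltnP k n; first by rewrite /= modn_small.
have k_eq : val k = n by apply/anti_leq; rewrite le_nk -ltnS ltn_ord.
have -> : ordS k = ord0 by apply: val_inj; rewrite /= k_eq modnn.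
by rewrite expg0 perm1 k_eq permX; have := iter_porbit p x; rewrite card_orbit.
Qed.

Lemma exists_lift_perm n (t : 'S_n.+1) i j :
  t i = j -> exists s : 'S_n, lift_perm i j s = t.
Proof.
move=> tij; have lift_t (k : 'I_n) : {k' | t (lift i k) = lift j k'}.
  case: (unliftP j (t (lift i k))) => [k' -> | t_ik]; first by exists k'.
  by move: (neq_lift i k); rewrite -(inj_eq (@perm_inj _ t)) t_ik tij eqxx.
have f_inj : injective (fun k => sval (lift_t k)).
  move=> k1 k2 eq_f; apply: (lift_inj (h := i)); apply: (@perm_inj _ t).
  by rewrite (svalP (lift_t k1)) (svalP (lift_t k2)) eq_f.
exists (perm f_inj); apply/permP => k; case: (unliftP i k) => [k' | ] ->.
  by rewrite lift_perm_lift permE -(svalP (lift_t k')).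
by rewrite lift_perm_id tij.
Qed.

(* With t := lift_perm ord0 ord_max s listing m, s 0, ..., s (m - 1), the
   conjugate of i |-> i + 1 by t is the cycle (m, s 0, ..., s (m - 1)). *)
Definition cycle_of m (s : 'S_m) : 'S_m.+1 :=
  (ordS_perm m.+1 ^ lift_perm ord0 ord_max s)%g.

Lemma cycle_of_cyclic m (s : 'S_m) : is_cyclic (cycle_of s).
Proof. exact: ordS_perm_conj_cyclic. Qed.

Lemma cycle_of_inj m : injective (@cycle_of m).
Proof.
move=> s1 s2 eq_cycle; apply/permP => k; apply: (@lift_inj _ ord_max).
rewrite -!(lift_perm_lift ord0).
rewrite -(ordS_perm_conjX (lift_perm _ _ s1)) -(ordS_perm_conjX (lift_perm _ _ s2)).
by rewrite !lift_perm_id; congr (fun_of_perm (_ ^+ _)%g _).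
Qed.

Lemma cycle_of_onto m (p : 'S_m.+1) : is_cyclic p -> exists s, cycle_of s = p.
Proof.
case/(cyclic_ordS_perm_conj ord_max) => t t0 <-.
by have [s <-] := exists_lift_perm t0; exists s.
Qed.

Lemma size_oneline m (s : 'S_m) : size (oneline s) = m.
Proof. by rewrite size_map size_enum_ord. Qed.

Lemma nth_oneline m (s : 'S_m) (i : 'I_m) : nth 0 (oneline s) i = s i.
Proof. by rewrite (nth_map i) ?size_enum_ord // nth_ord_enum. Qed.

Definition cycle_word m (s : 'S_m) : seq nat := m :: rcons (oneline s) m.

Section CycleWord.
Variables (m : nat) (s : 'S_m).
Local Notation t := (lift_perm ord0 ord_max s).

Lemma size_cycle_word : size (cycle_word s) = m.+2.
Proof. by rewrite /= size_rcons size_oneline. Qed.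

Lemma nth_cycle_word (k : 'I_m.+1) : nth 0 (cycle_word s) k = t k.
Proof.
case: (unliftP ord0 k) => [k' | ] ->; last by rewrite lift_perm_id.
rewrite lift_perm_lift /= nth_rcons size_oneline ltn_ord nth_oneline.
by rewrite /bump leqNgt ltn_ord.
Qed.

Lemma nth_cycle_word_succ (k : 'I_m.+1) :
  nth 0 (cycle_word s) k.+1 = cycle_of s (t k).
Proof.
rewrite /cycle_of ordS_perm_conjE; have [lt_km | le_mk] := ltnP k m.
  by rewrite -[k.+1](@modn_small _ m.+1) // (nth_cycle_word (ordS k)).
have k_eq : val k = m by apply/anti_leq; rewrite le_mk -ltnS ltn_ord.
have -> : ordS k = ord0 by apply: val_inj; rewrite /= k_eq modnn.
by rewrite lift_perm_id /= k_eq nth_rcons size_oneline ltnn eqxx.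
Qed.

End CycleWord.

Definition has_crossing_steps (c : seq nat) : Prop := exists i j,
  [/\ i.+1 < size c, j.+1 < size c &
      crossing (nth 0 c i) (nth 0 c i.+1) (nth 0 c j) (nth 0 c j.+1)].

Lemma contains321_cycle_ofP m (s : 'S_m) :
  reflect (has_crossing_steps (cycle_word s)) (contains321 (cycle_of s)).
Proof.
set t := lift_perm ord0 ord_max s; rewrite /has_crossing_steps size_cycle_word.
apply: (iffP (contains321P _)) => [[x [y]] | [i [j [lt_i lt_j]]]].
  rewrite -[x](permKV t) -[y](permKV t).
  move: (t^-1 x)%g (t^-1 y)%g => i j; rewrite -!nth_cycle_word -!nth_cycle_word_succ.
  by move=> cross; exists i, j; split; rewrite // ltnS; apply: ltn_ord.
move=> cross; exists (t (@Ordinal m.+1 i lt_i)), (t (@Ordinal m.+1 j lt_j)).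
by rewrite -!nth_cycle_word -!nth_cycle_word_succ.
Qed.

Section VincularP.
Variable w : seq nat.
Local Notation W i := (nth 0 w i).

Lemma two_blockP (P : nat -> nat -> nat -> nat -> bool) :
  reflect (exists i j, [/\ i.+2 <= j, j.+1 < size w & P (W i) (W i.+1) (W j) (W j.+1)])
          (two_block w P).
Proof.
apply: (iffP existsP) => [[i /existsP[j /and3P[]]] | [i [j [le_ij lt_j P_ij]]]].
  by exists i, j.
have lt_i : i < size w by lia.
have lt_j' : j < size w by lia.
by exists (Ordinal lt_i); apply/existsP; exists (Ordinal lt_j'); apply/and3P.
Qed.

Lemma contains_231P : reflect (exists i, i.+2 < size w /\
    W (size w).-1 < W i < W i.+1) (contains_231 w).
Proof.
apply: (iffP existsP) => [[i /andP[]] | [i [lt_i ?]]]; first by exists i.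
have lt_i' : i < size w by lia.
by exists (Ordinal lt_i'); apply/andP.
Qed.

Lemma contains_132P : reflect (exists j, [/\ 0 < j, j.+1 < size w &
    W 0 < W j.+1 < W j]) (contains_132 w).
Proof.
apply: (iffP existsP) => [[j /and3P[]] | [j [? lt_j ?]]]; first by exists j.
have lt_j' : j < size w by lia.
by exists (Ordinal lt_j'); apply/and3P.
Qed.

End VincularP.

Definition two_block_patterns (w : seq nat) : bool :=
  [|| contains_3241 w, contains_1423 w, contains_4132 w | contains_2314 w].

Lemma avoids_all_sixE w :
  ~~ avoids_all_six w = [|| two_block_patterns w, contains_231 w | contains_132 w].
Proof. by rewrite /avoids_all_six negbK /two_block_patterns !orbA. Qed.

Section ClosedWord.
Variable w : seq nat.
Local Notation m := (size w).
Local Notation W i := (nth 0 w i).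
Local Notation c k := (nth 0 (m :: rcons w m) k).
Hypothesis w_lt : forall i, W i < m.
Hypothesis w_step_neq : forall i, i.+1 < m -> W i != W i.+1.

Lemma two_block_patternsP : reflect
  (exists a b, [/\ a.+1 < m, b.+1 < m & crossing (W a) (W a.+1) (W b) (W b.+1)])
  (two_block_patterns w).
Proof.
apply: (iffP idP) => [|[a [b [lt_a lt_b]]]].
  case/or4P => /two_blockP[i [j [le_ij lt_j P_ij]]];
    [exists i, j | exists i, j | exists j, i | exists j, i];
    by split; rewrite /crossing; lia.
move: (w_step_neq lt_a) (w_step_neq lt_b); rewrite /crossing => ? ? cross.
have ne_ab : a != b by apply: contraTneq cross => ->; lia.
have ne_b_Sa : b != a.+1 by apply: contraTneq cross => ->; lia.
have ne_a_Sb : a != b.+1 by apply: contraTneq cross => ->; lia.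
have [le_ab | le_ba] : a.+2 <= b \/ b.+2 <= a by lia.
- have [up_a | down_a] := ltnP (W a) (W a.+1).
    by apply/or4P; constructor 2; apply/two_blockP; exists a, b; split; lia.
  by apply/or4P; constructor 1; apply/two_blockP; exists a, b; split; lia.
- have [up_a | down_a] := ltnP (W a) (W a.+1).
    by apply/or4P; constructor 4; apply/two_blockP; exists b, a; split; lia.
  by apply/or4P; constructor 3; apply/two_blockP; exists b, a; split; lia.
Qed.

Lemma bounded_size_gt0 : 0 < m.
Proof. exact: leq_ltn_trans (w_lt 0). Qed.

Lemma closed_word_first : c 1 = W 0.
Proof. by rewrite /= nth_rcons bounded_size_gt0. Qed.

Lemma closed_word_last : c m = W m.-1 /\ c m.+1 = m.
Proof.
split; last by rewrite /= nth_rcons ltnn eqxx.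
rewrite -[X in nth _ (_ :: _) X](prednK bounded_size_gt0) /= nth_rcons.
by rewrite ltn_predL bounded_size_gt0.
Qed.

Lemma closed_word_interior a : a.+1 < m -> c a.+1 = W a /\ c a.+2 = W a.+1.
Proof. by move=> lt_am; rewrite /= !nth_rcons lt_am ltnW. Qed.

Lemma closed_word_step k : k <= m ->
  [\/ [/\ k = 0, c k = m & c k.+1 = W 0],
      [/\ k = m, c k = W m.-1 & c k.+1 = m] |
      exists2 a, k = a.+1 & [/\ a.+1 < m, c k = W a & c k.+1 = W a.+1]].
Proof.
case: k => [|a] le_am; first by constructor 1; rewrite closed_word_first.
have [eq_am | ne_am] := eqVneq a.+1 m.
  by constructor 2; rewrite eq_am; case: closed_word_last => -> ->.
have lt_am : a.+1 < m by lia.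
by constructor 3; exists a => //; case: (closed_word_interior lt_am) => -> ->.
Qed.

Lemma closed_word_crossing_patterns i j : i <= m -> j <= m ->
  crossing (c i) (c i.+1) (c j) (c j.+1) -> ~~ avoids_all_six w.
Proof.
rewrite avoids_all_sixE => le_i le_j.
case: (closed_word_step le_i) => [[-> -> ->] | [-> -> ->] | [a -> [lt_a -> ->]]];
case: (closed_word_step le_j) => [[-> -> ->] | [-> -> ->] | [b -> [lt_b -> ->]]].
- by rewrite /crossing; lia.
- by move: (w_lt m.-1); rewrite /crossing; lia.
- by move: (w_lt b); rewrite /crossing; lia.
- by move: (w_lt m.-1) (w_lt 0); rewrite /crossing; lia.
- by rewrite /crossing; lia.
- move=> cross; suff -> : contains_231 w by rewrite orbT.
  apply/contains_231P; exists b; move: cross; rewrite /crossing.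
  have [eq_bm | ] := eqVneq b.+2 m; last by move: (w_lt m.-1); lia.
  by rewrite -eq_bm /=; lia.
- move=> cross; suff -> : contains_132 w by rewrite !orbT.
  apply/contains_132P; exists a.
  move: (w_lt 0) (w_step_neq lt_a) cross; rewrite /crossing.
  by case: a lt_a {le_i} => [|a] lt_a *; split; lia.
- by move: (w_lt a.+1); rewrite /crossing; lia.
- by move=> cross; apply/orP; left; apply/two_block_patternsP; exists a, b.
Qed.

Lemma patterns_closed_word_crossing :
  ~~ avoids_all_six w -> has_crossing_steps (m :: rcons w m).
Proof.
have size_c : size (m :: rcons w m) = m.+2 by rewrite /= size_rcons.
rewrite /has_crossing_steps avoids_all_sixE size_c.
case/or3P => [/two_block_patternsP[a [b [lt_a lt_b cross]]] |
              /contains_231P[b [lt_b ?]] | /contains_132P[a [? lt_a ?]]].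
- exists a.+1, b.+1; case: (closed_word_interior lt_a) => -> ->.
  by case: (closed_word_interior lt_b) => -> ->; split; lia.
- exists m, b.+1; case: closed_word_last => -> ->.
  case: (closed_word_interior (ltnW lt_b)) => -> ->.
  by move: (w_lt b.+1) (w_lt m.-1); rewrite /crossing; split; lia.
- exists a.+1, 0; rewrite closed_word_first; case: (closed_word_interior lt_a) => -> ->.
  by move: (w_lt a) (w_lt 0); rewrite /crossing /=; split; lia.
Qed.

Lemma closed_word_crossingP :
  reflect (has_crossing_steps (m :: rcons w m)) (~~ avoids_all_six w).
Proof.
apply: (iffP idP) => [|[i [j [lt_i lt_j]]]]; first exact: patterns_closed_word_crossing.
by apply: closed_word_crossing_patterns; rewrite -ltnS -(size_rcons w m).
Qed.

End ClosedWord.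

Lemma contains321_cycle_ofE m (s : 'S_m) :
  0 < m -> contains321 (cycle_of s) = ~~ avoids_all_six (oneline s).
Proof.
move=> m_gt0; have entries_lt i : nth 0 (oneline s) i < size (oneline s).
  rewrite size_oneline; have [lt_im | le_mi] := ltnP i m.
    by rewrite (nth_oneline s (Ordinal lt_im)).
  by rewrite nth_default ?size_oneline.
have entries_neq i : i.+1 < size (oneline s) ->
    nth 0 (oneline s) i != nth 0 (oneline s) i.+1.
  move=> lt_i; rewrite nth_uniq ?(ltnW lt_i) ?(ltn_eqF (ltnSn i)) //.
  by rewrite map_inj_uniq ?enum_uniq // => x y /val_inj /perm_inj.
apply: sameP (contains321_cycle_ofP s) _.
have -> : cycle_word s = size (oneline s) :: rcons (oneline s) (size (oneline s)).
  by rewrite size_oneline.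
exact: closed_word_crossingP entries_lt entries_neq.
Qed.

Theorem mainTheorem2 (n : nat) : 2 <= n -> #|C321 n| = #|A_set n.-1|.
Proof.
case: n => [|[|m]] // _ /=.
have -> : C321 m.+2 = @cycle_of m.+1 @: A_set m.+1.
  apply/setP => p; rewrite inE; apply/andP/imsetP => [[cyc] | [s]].
    have [s <-] := cycle_of_onto cyc.
    by rewrite contains321_cycle_ofE // negbK => avoids; exists s; rewrite ?inE.
  by rewrite inE => avoids ->; rewrite cycle_of_cyclic contains321_cycle_ofE // avoids.
by rewrite card_imset //; exact: cycle_of_inj.
Qed.
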